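(* Let $B\colon\mathsf{Set}\to\mathsf{Set}$ be countably accessible. Suppose $(T_c,\eta^c,\mu^c)$ is a monad on $\mathsf{cSet}$ which lifts to a monad $(\overline{T}_c,\overline{\eta}^c,\overline{\mu}^c)$ on $\mathsf{Coalg}_c(B)$. Then: (1) $(T_c,\eta^c,\mu^c)$ extends to a monad $(T,\eta,\mu)$ on $\mathsf{Set}$ along the inclusion $I\colon\mathsf{cSet}\to\mathsf{Set}$; (2) $(\overline{T}_c,\overline{\eta}^c,\overline{\mu}^c)$ extends to a monad $(\overline{T},\overline{\eta},\overline{\mu})$ on $\mathsf{Coalg}(B)$ along the inclusion $\overline{I}\colon\mathsf{Coalg}_c(B)\to\mathsf{Coalg}(B)$; (3) $(\overline{T},\overline{\eta},\overline{\mu})$ is a lifting up to isomorphism of $(T,\eta,\mu)$.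
   Context: A functor $B\colon\mathsf{Set}\to\mathsf{Set}$ is countably accessible if for every set $X$ and every $x\in BX$ there are a countable set $Y$, an injective function $i\colon Y\to X$ and $y\in BY$ with $Bi(y)=x$. $\mathsf{cSet}$ is the full subcategory of countable sets; $\mathsf{Coalg}(B)$ is the category of $B$-coalgebras $c\colon X\to BX$ and homomorphisms ($h$ with $Bh\circ c=d\circ h$), and $\mathsf{Coalg}_c(B)$ its full subcategory of coalgebras with countable carrier. A monad $(T,\eta,\mu)$ on a category $\mathcal D$ extends a monad $(T_c,\eta^c,\mu^c)$ on a full subcategory $J\colon\mathcal{D}_c\to\mathcal D$ along $J$ if there is a natural isomorphism $\alpha\colon JT_c\Rightarrow TJ$ with $\alpha\circ J\eta^c=\eta J$ and $\alpha\circ J\mu^c=\mu J\circ T\alpha\circ\alpha T_c$. A monad $(\overline T,\overline\eta,\overline\mu)$ on a category of coalgebras with forgetful functor $U$ lifts a monad $(T,\eta,\mu)$ on the base category if $U\overline T=TU$, $U\overline\eta=\eta U$, $U\overline\mu=\mu U$; it is a lifting up to isomorphism if there is a natural isomorphism $\alpha\colon U\overline{T}\Rightarrow TU$ with $\alpha\circ U\overline{\eta}=\eta U$ and $\alpha\circ U\overline{\mu}=\mu U\circ T\alpha\circ\alpha\overline{T}$. *)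

Definition injective {X Y : Type} (f : X -> Y) : Prop :=
  forall a b, f a = f b -> a = b.

Definition countable (X : Type) : Prop := exists f : X -> nat, injective f.

Definition is_iso {X Y : Type} (f : X -> Y) : Prop :=
  exists g : Y -> X, (forall x, g (f x) = x) /\ (forall y, f (g y) = y).

Record Functor := {
  F_obj :> Type -> Type;
  F_map : forall X Y : Type, (X -> Y) -> F_obj X -> F_obj Y;
  F_id : forall X (x : F_obj X), F_map X X (fun a : X => a) x = x;
  F_comp : forall X Y Z (f : X -> Y) (g : Y -> Z) (x : F_obj X),
      F_map Y Z g (F_map X Y f x) = F_map X Z (fun a => g (f a)) x
}.
Arguments F_map _ {X Y} _ _.

Definition countably_accessible (B : Functor) : Prop :=
  forall (X : Type) (x : B X), exists (Y : Type) (i : Y -> X),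
    countable Y /\ injective i /\ exists y : B Y, F_map B i y = x.

Record Monad := {
  mT :> Type -> Type;
  mT_map : forall X Y : Type, (X -> Y) -> mT X -> mT Y;
  mT_id : forall X (t : mT X), mT_map X X (fun a : X => a) t = t;
  mT_comp : forall X Y Z (f : X -> Y) (g : Y -> Z) (t : mT X),
      mT_map Y Z g (mT_map X Y f t) = mT_map X Z (fun a => g (f a)) t;
  m_eta : forall X : Type, X -> mT X;
  m_mu : forall X : Type, mT (mT X) -> mT X;
  m_eta_nat : forall X Y (f : X -> Y) (x : X), m_eta Y (f x) = mT_map X Y f (m_eta X x);
  m_mu_nat : forall X Y (f : X -> Y) (t : mT (mT X)),
      m_mu Y (mT_map (mT X) (mT Y) (mT_map X Y f) t) = mT_map X Y f (m_mu X t);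
  m_unit_l : forall X (t : mT X), m_mu X (m_eta (mT X) t) = t;
  m_unit_r : forall X (t : mT X), m_mu X (mT_map X (mT X) (m_eta X) t) = t;
  m_assoc : forall X (t : mT (mT (mT X))),
      m_mu X (m_mu (mT X) t) = m_mu X (mT_map (mT (mT X)) (mT X) (m_mu X) t)
}.
Arguments mT_map _ {X Y} _ _.
Arguments m_eta _ {X} _.
Arguments m_mu _ {X} _.

Record CSet := { cs_car :> Type; cs_cnt : countable cs_car }.

Record cMonad := {
  cT : CSet -> CSet;
  cT_map : forall X Y : CSet, (X -> Y) -> cT X -> cT Y;
  cT_id : forall (X : CSet) (t : cT X), cT_map X X (fun a : X => a) t = t;
  cT_comp : forall (X Y Z : CSet) (f : X -> Y) (g : Y -> Z) (t : cT X),
      cT_map Y Z g (cT_map X Y f t) = cT_map X Z (fun a => g (f a)) t;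
  c_eta : forall X : CSet, X -> cT X;
  c_mu : forall X : CSet, cT (cT X) -> cT X;
  c_eta_nat : forall (X Y : CSet) (f : X -> Y) (x : X),
      c_eta Y (f x) = cT_map X Y f (c_eta X x);
  c_mu_nat : forall (X Y : CSet) (f : X -> Y) (t : cT (cT X)),
      c_mu Y (cT_map (cT X) (cT Y) (cT_map X Y f) t) = cT_map X Y f (c_mu X t);
  c_unit_l : forall (X : CSet) (t : cT X), c_mu X (c_eta (cT X) t) = t;
  c_unit_r : forall (X : CSet) (t : cT X), c_mu X (cT_map X (cT X) (c_eta X) t) = t;
  c_assoc : forall (X : CSet) (t : cT (cT (cT X))),
      c_mu X (c_mu (cT X) t) = c_mu X (cT_map (cT (cT X)) (cT X) (c_mu X) t)
}.
Arguments cT_map _ {X Y} _ _.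
Arguments c_eta _ {X} _.
Arguments c_mu _ {X} _.

Record Coalg (B : Functor) := { car : Type; str : car -> B car }.
Arguments car {B} _.
Arguments str {B} _ _.

Definition is_hom {B : Functor} {X Y : Type} (c : X -> B X) (d : Y -> B Y)
  (h : X -> Y) : Prop := forall x, F_map B h (c x) = d (h x).

Record CHom {B : Functor} (C D : Coalg B) := {
  hfun :> car C -> car D;
  hhom : is_hom (str C) (str D) hfun
}.
Arguments hfun {B C D} _ _.
Arguments hhom {B C D} _ _.

Lemma id_is_hom (B : Functor) (C : Coalg B) :
  is_hom (str C) (str C) (fun a => a).
Proof. intro x. apply F_id. Qed.

Definition chom_id (B : Functor) (C : Coalg B) : CHom C C :=
  {| hfun := fun a => a; hhom := @id_is_hom B C |}.

Lemma comp_is_hom (B : Functor) (C D E : Coalg B) (f : CHom C D) (g : CHom D E) :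
  is_hom (str C) (str E) (fun a => g (f a)).
Proof.
  intro x. rewrite <- F_comp. rewrite (hhom f x). apply (hhom g).
Qed.

Definition chom_comp (B : Functor) (C D E : Coalg B) (g : CHom D E) (f : CHom C D)
  : CHom C E := {| hfun := fun a => g (f a); hhom := @comp_is_hom B C D E f g |}.

Record CoalgMonad (B : Functor) := {
  bT : Coalg B -> Coalg B;
  bT_map : forall C D : Coalg B, CHom C D -> CHom (bT C) (bT D);
  bT_id : forall (C : Coalg B) (t : car (bT C)), bT_map C C (chom_id B C) t = t;
  bT_comp : forall (C D E : Coalg B) (f : CHom C D) (g : CHom D E) (t : car (bT C)),
      bT_map D E g (bT_map C D f t) = bT_map C E (chom_comp B C D E g f) t;
  b_eta : forall C : Coalg B, CHom C (bT C);
  b_mu : forall C : Coalg B, CHom (bT (bT C)) (bT C);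
  b_eta_nat : forall (C D : Coalg B) (f : CHom C D) (x : car C),
      b_eta D (f x) = bT_map C D f (b_eta C x);
  b_mu_nat : forall (C D : Coalg B) (f : CHom C D) (t : car (bT (bT C))),
      b_mu D (bT_map (bT C) (bT D) (bT_map C D f) t) = bT_map C D f (b_mu C t);
  b_unit_l : forall (C : Coalg B) (t : car (bT C)), b_mu C (b_eta (bT C) t) = t;
  b_unit_r : forall (C : Coalg B) (t : car (bT C)), b_mu C (bT_map C (bT C) (b_eta C) t) = t;
  b_assoc : forall (C : Coalg B) (t : car (bT (bT (bT C)))),
      b_mu C (b_mu (bT C) t) = b_mu C (bT_map (bT (bT C)) (bT C) (b_mu C) t)
}.
Arguments bT {B} _ _.
Arguments bT_map {B} _ {C D} _.
Arguments b_eta {B} _ _.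
Arguments b_mu {B} _ _.

Record CCoalg (B : Functor) := { cc_car : CSet; cc_str : cc_car -> B cc_car }.
Arguments cc_car {B} _.
Arguments cc_str {B} _ _.

Definition Ibar {B : Functor} (C : CCoalg B) : Coalg B :=
  {| car := cs_car (cc_car C); str := cc_str C |}.

(* A (strict) lifting of the monad M on cSet to Coalg_c(B): U Tbar = T U,
   U etabar = eta U, U mubar = mu U.  Concretely Tbar(X,c) = (T X, lstr (X,c)),
   Tbar h = T h, etabar = eta, mubar = mu; these must be coalgebra
   homomorphisms.  The monad laws of Tbar are then those of M. *)
Record cLifting (B : Functor) (M : cMonad) := {
  lstr : forall C : CCoalg B, cT M (cc_car C) -> B (cT M (cc_car C));
  lmap_hom : forall (C D : CCoalg B) (h : cc_car C -> cc_car D),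
      is_hom (cc_str C) (cc_str D) h -> is_hom (lstr C) (lstr D) (cT_map M h);
  leta_hom : forall C : CCoalg B, is_hom (cc_str C) (lstr C) (@c_eta M (cc_car C));
  lmu_hom : forall C : CCoalg B,
      is_hom (lstr {| cc_car := cT M (cc_car C); cc_str := lstr C |}) (lstr C)
             (@c_mu M (cc_car C))
}.
Arguments lstr {B M} _ _ _.

Definition Tbarc {B : Functor} {M : cMonad} (L : cLifting B M) (C : CCoalg B)
  : CCoalg B := {| cc_car := cT M (cc_car C); cc_str := lstr L C |}.

Definition extends_set (M : cMonad) (N : Monad) : Prop :=
  exists alpha : forall X : CSet, cT M X -> N X,
    (forall X, is_iso (alpha X)) /\
    (forall (X Y : CSet) (f : X -> Y) (t : cT M X),
        alpha Y (cT_map M f t) = mT_map N f (alpha X t)) /\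
    (forall (X : CSet) (x : X), alpha X (c_eta M x) = m_eta N x) /\
    (forall (X : CSet) (t : cT M (cT M X)),
        alpha X (c_mu M t) = m_mu N (mT_map N (alpha X) (alpha (cT M X) t))).

Definition extends_coalg {B : Functor} {M : cMonad} (L : cLifting B M)
  (P : CoalgMonad B) : Prop :=
  exists alpha : forall C : CCoalg B, CHom (Ibar (Tbarc L C)) (bT P (Ibar C)),
    (forall C, exists inv : CHom (bT P (Ibar C)) (Ibar (Tbarc L C)),
        (forall x, inv (alpha C x) = x) /\ (forall y, alpha C (inv y) = y)) /\
    (forall (C D : CCoalg B) (h : CHom (Ibar C) (Ibar D)) (t : cT M (cc_car C)),
        alpha D (cT_map M (hfun h) t) = bT_map P h (alpha C t)) /\
    (forall (C : CCoalg B) (x : cc_car C),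
        alpha C (c_eta M x) = b_eta P (Ibar C) x) /\
    (forall (C : CCoalg B) (t : cT M (cT M (cc_car C))),
        alpha C (c_mu M t)
        = b_mu P (Ibar C) (bT_map P (alpha C) (alpha (Tbarc L C) t))).

Definition lifts_upto_iso {B : Functor} (N : Monad) (P : CoalgMonad B) : Prop :=
  exists alpha : forall C : Coalg B, car (bT P C) -> N (car C),
    (forall C, is_iso (alpha C)) /\
    (forall (C D : Coalg B) (h : CHom C D) (t : car (bT P C)),
        alpha D (bT_map P h t) = mT_map N (hfun h) (alpha C t)) /\
    (forall (C : Coalg B) (x : car C), alpha C (b_eta P C x) = m_eta N x) /\
    (forall (C : Coalg B) (t : car (bT P (bT P C))),
        alpha C (b_mu P C t) = m_mu N (mT_map N (alpha C) (alpha (bT P C) t))).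

From Stdlib Require Import ClassicalEpsilon FunctionalExtensionality ProofIrrelevance
  Classical PropExtensionality Cantor.

(** The extension [T] of [T_c] is the colimit of [T_c S] over the countable subsets [S]
    of [X].  Since countable unions of countable sets are countable, any countable
    family of elements of [T X] has representatives over one common countable [S], so
    the multiplication and the monad laws can be computed inside [T_c]; on a countable
    [X] the colimit is attained at [S = X], so [T] extends [T_c].  For coalgebras,
    countable accessibility of [B] puts every countable subset of a coalgebra into a
    countable subcoalgebra [S]; the structure of [T X] at a class represented over [S]
    is the lifted structure of [T_c S] pushed forward into [T X], and the lifting makes
    this independent of [S].  The extended coalgebra monad then has carrier [T X] on the
    nose, which gives the lifting up to isomorphism. *)

(** A countable subset of [X] is presented by an enumeration [s : nat -> option X]. *)

Definition in_enum {X : Type} (s : nat -> option X) (x : X) : Prop :=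
  exists n, s n = Some x.

Definition enum_incl {X : Type} (s s' : nat -> option X) : Prop :=
  forall x, in_enum s x -> in_enum s' x.

Lemma sig_val_inj {X : Type} (P : X -> Prop) (p1 p2 : {x | P x}) :
  proj1_sig p1 = proj1_sig p2 -> p1 = p2.
Proof. destruct p1, p2; simpl; intros ->; f_equal; apply proof_irrelevance. Qed.

Lemma enum_set_countable {X : Type} (s : nat -> option X) : countable {x | in_enum s x}.
Proof.
  exists (fun p : {x | in_enum s x} => proj1_sig (constructive_indefinite_description
     (fun n => s n = Some (proj1_sig p)) (proj2_sig p))).
  intros a b E.
  destruct (constructive_indefinite_description _ (proj2_sig a)) as [na Ha].
  destruct (constructive_indefinite_description _ (proj2_sig b)) as [nb Hb].
  simpl in E; subst. apply sig_val_inj. rewrite Ha in Hb. congruence.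
Qed.

Definition enum_set {X : Type} (s : nat -> option X) : CSet :=
  Build_CSet {x | in_enum s x} (enum_set_countable s).

Definition enum_val {X : Type} (s : nat -> option X) (p : enum_set s) : X := proj1_sig p.

Lemma enum_val_injective {X : Type} (s : nat -> option X) : injective (enum_val s).
Proof. intros a b E. apply sig_val_inj, E. Qed.

Definition incl_map {X : Type} {s s' : nat -> option X} (H : enum_incl s s')
  (p : enum_set s) : enum_set s' :=
  exist _ (proj1_sig p) (H _ (proj2_sig p)).

Lemma enum_incl_refl {X : Type} (s : nat -> option X) : enum_incl s s.
Proof. intros x H; exact H. Qed.

Lemma enum_incl_trans {X : Type} (s1 s2 s3 : nat -> option X) :
  enum_incl s1 s2 -> enum_incl s2 s3 -> enum_incl s1 s3.
Proof. intros H1 H2 x H; auto. Qed.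

Definition enum_bigU {X : Type} (ss : nat -> nat -> option X) : nat -> option X :=
  fun n => let (a, b) := of_nat n in ss a b.

Lemma enum_bigU_incl {X : Type} (ss : nat -> nat -> option X) k :
  enum_incl (ss k) (enum_bigU ss).
Proof.
  intros x [m Hm]. exists (to_nat (k, m)). unfold enum_bigU. rewrite cancel_of_to. exact Hm.
Qed.

Lemma in_enum_bigU {X : Type} (ss : nat -> nat -> option X) x :
  in_enum (enum_bigU ss) x -> exists k, in_enum (ss k) x.
Proof.
  intros [n Hn]. unfold enum_bigU in Hn. destruct (of_nat n) as [a b]. exists a, b. exact Hn.
Qed.

Definition enum_union {X : Type} (s1 s2 : nat -> option X) : nat -> option X :=
  enum_bigU (fun k => match k with 0 => s1 | _ => s2 end).

Lemma enum_union_l {X : Type} (s1 s2 : nat -> option X) : enum_incl s1 (enum_union s1 s2).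
Proof. exact (enum_bigU_incl (fun k => match k with 0 => s1 | _ => s2 end) 0). Qed.

Lemma enum_union_r {X : Type} (s1 s2 : nat -> option X) : enum_incl s2 (enum_union s1 s2).
Proof. exact (enum_bigU_incl (fun k => match k with 0 => s1 | _ => s2 end) 1). Qed.

Definition enum_image {X Y : Type} (f : X -> Y) (s : nat -> option X) : nat -> option Y :=
  fun n => option_map f (s n).

Lemma in_enum_image {X Y : Type} (f : X -> Y) (s : nat -> option X) x :
  in_enum s x -> in_enum (enum_image f s) (f x).
Proof. intros [n Hn]. exists n. unfold enum_image. rewrite Hn. reflexivity. Qed.

Definition image_map {X Y : Type} (f : X -> Y) (s : nat -> option X)
  (p : enum_set s) : enum_set (enum_image f s) :=
  exist _ (f (proj1_sig p)) (in_enum_image f s _ (proj2_sig p)).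

Definition enum_single {X : Type} (x : X) : nat -> option X := fun _ => Some x.

Definition enum_single_pt {X : Type} (x : X) : enum_set (enum_single x) :=
  exist _ x (ex_intro _ 0 eq_refl).

Lemma enum_single_val {X : Type} (x : X) (p : enum_set (enum_single x)) : proj1_sig p = x.
Proof. destruct p as [y [n Hy]]. simpl. unfold enum_single in Hy. congruence. Qed.

Definition enum_of_countable (Y : Type) (H : countable Y) : nat -> option Y :=
  let f := proj1_sig (constructive_indefinite_description _ H) in
  fun n => match excluded_middle_informative (exists y, f y = n) with
           | left e => Some (proj1_sig (constructive_indefinite_description _ e))
           | right _ => None end.

Lemma in_enum_of_countable (Y : Type) (H : countable Y) (y : Y) :
  in_enum (enum_of_countable Y H) y.
Proof.
  unfold enum_of_countable.
  destruct (constructive_indefinite_description _ H) as [f Hf]. simpl.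
  exists (f y). destruct (excluded_middle_informative _) as [e | ne].
  - destruct (constructive_indefinite_description _ e) as [y' Hy']. simpl. f_equal. apply Hf, Hy'.
  - exfalso. apply ne. eauto.
Qed.

Section Extension.
Variable M : cMonad.

Lemma cT_map_comp_ext {A B C : CSet} (f : A -> B) (g : B -> C) (h : A -> C) t :
  (forall a, g (f a) = h a) -> cT_map M g (cT_map M f t) = cT_map M h t.
Proof. intro H. rewrite cT_comp. f_equal. extensionality a. apply H. Qed.

Lemma cT_map_val_ext {Z : CSet} {X : Type} (s : nat -> option X) (h1 h2 : Z -> enum_set s) t :
  (forall z, proj1_sig (h1 z) = proj1_sig (h2 z)) -> cT_map M h1 t = cT_map M h2 t.
Proof. intro H. f_equal. extensionality z. apply sig_val_inj, H. Qed.

Lemma cT_map_comp_val {Z Y : CSet} {X : Type} (s : nat -> option X) (f : Z -> Y)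
  (g : Y -> enum_set s) (h : Z -> enum_set s) t :
  (forall z, proj1_sig (g (f z)) = proj1_sig (h z)) ->
  cT_map M g (cT_map M f t) = cT_map M h t.
Proof. intro H. rewrite cT_comp. apply cT_map_val_ext, H. Qed.

(** A representative of an element of [T X] is an enumerated subset [s] with an element
    of [T_c s]; two representatives are identified when they agree after inclusion into
    a common subset. *)

Definition Rep (X : Type) := {s : nat -> option X & cT M (enum_set s)}.

Definition rep_equiv {X : Type} (r1 r2 : Rep X) : Prop :=
  exists s3 (H1 : enum_incl (projT1 r1) s3) (H2 : enum_incl (projT1 r2) s3),
    cT_map M (incl_map H1) (projT2 r1) = cT_map M (incl_map H2) (projT2 r2).

Lemma rep_equiv_refl {X : Type} (r : Rep X) : rep_equiv r r.
Proof. exists (projT1 r), (enum_incl_refl _), (enum_incl_refl _). reflexivity. Qed.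

Lemma rep_equiv_sym {X : Type} (r1 r2 : Rep X) : rep_equiv r1 r2 -> rep_equiv r2 r1.
Proof. intros (s3 & H1 & H2 & E). exists s3, H2, H1. auto. Qed.

Lemma rep_equiv_trans {X : Type} (r1 r2 r3 : Rep X) :
  rep_equiv r1 r2 -> rep_equiv r2 r3 -> rep_equiv r1 r3.
Proof.
  intros (s4 & H1 & H2 & E) (s5 & H2' & H3 & E').
  exists (enum_union s4 s5), (enum_incl_trans _ _ _ H1 (enum_union_l s4 s5)),
    (enum_incl_trans _ _ _ H3 (enum_union_r s4 s5)).
  transitivity (cT_map M (incl_map (enum_union_l s4 s5)) (cT_map M (incl_map H1) (projT2 r1))).
  { symmetry. apply cT_map_comp_val. reflexivity. }
  rewrite E.
  transitivity (cT_map M (incl_map (enum_union_r s4 s5)) (cT_map M (incl_map H2') (projT2 r2))).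
  { rewrite !cT_comp. apply cT_map_val_ext. reflexivity. }
  rewrite E'. apply cT_map_comp_val. reflexivity.
Qed.

Definition ExtT (X : Type) : Type := {P : Rep X -> Prop | exists r, P = rep_equiv r}.

Definition rep_class {X : Type} (r : Rep X) : ExtT X :=
  exist _ (rep_equiv r) (ex_intro _ r eq_refl).

Definition tclass {X : Type} (s : nat -> option X) (t : cT M (enum_set s)) : ExtT X :=
  rep_class (existT _ s t).

Lemma rep_class_eq {X : Type} (r1 r2 : Rep X) : rep_equiv r1 r2 -> rep_class r1 = rep_class r2.
Proof.
  intro H. apply sig_val_inj. simpl. extensionality r. apply propositional_extensionality.
  split; intro H'.
  - apply rep_equiv_trans with r1; auto using rep_equiv_sym.
  - apply rep_equiv_trans with r2; auto.
Qed.

Lemma rep_class_eq_equiv {X : Type} (r1 r2 : Rep X) :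
  rep_class r1 = rep_class r2 -> rep_equiv r1 r2.
Proof.
  intro E. assert (E' : rep_equiv r1 = rep_equiv r2) by exact (f_equal (@proj1_sig _ _) E).
  rewrite E'. apply rep_equiv_refl.
Qed.

Lemma tclass_surj {X : Type} (q : ExtT X) : exists s t, q = tclass s t.
Proof.
  destruct q as [P [[s t] E]]. exists s, t. apply sig_val_inj. simpl. exact E.
Qed.

Definition repr_of {X : Type} (q : ExtT X) : Rep X :=
  proj1_sig (constructive_indefinite_description _ (proj2_sig q)).

Lemma rep_class_repr_of {X : Type} (q : ExtT X) : rep_class (repr_of q) = q.
Proof.
  unfold repr_of. destruct (constructive_indefinite_description _ (proj2_sig q)) as [r E].
  simpl. apply sig_val_inj. simpl. symmetry; exact E.
Qed.

Lemma rep_class_tclass {X : Type} (r : Rep X) : rep_class r = tclass (projT1 r) (projT2 r).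
Proof. destruct r; reflexivity. Qed.

Definition lift_class {X A : Type} (g : Rep X -> A) (q : ExtT X) : A := g (repr_of q).

Lemma lift_class_rep_class {X A : Type} (g : Rep X -> A)
  (Hg : forall r1 r2, rep_equiv r1 r2 -> g r1 = g r2) r :
  lift_class g (rep_class r) = g r.
Proof. apply Hg, rep_class_eq_equiv, rep_class_repr_of. Qed.

Lemma tclass_map_eq {Z : CSet} {X : Type} (s1 s2 : nat -> option X)
  (h1 : Z -> enum_set s1) (h2 : Z -> enum_set s2) (t : cT M Z) :
  (forall z, proj1_sig (h1 z) = proj1_sig (h2 z)) ->
  tclass s1 (cT_map M h1 t) = tclass s2 (cT_map M h2 t).
Proof.
  intro H. apply rep_class_eq.
  exists (enum_union s1 s2), (enum_union_l s1 s2), (enum_union_r s1 s2). simpl.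
  transitivity (cT_map M (fun z => incl_map (enum_union_l s1 s2) (h1 z)) t).
  - apply cT_map_comp_val; reflexivity.
  - symmetry. apply cT_map_comp_val. intro z. simpl. symmetry. apply H.
Qed.

Lemma tclass_incl {X : Type} (s s' : nat -> option X) (H : enum_incl s s') t :
  tclass s' (cT_map M (incl_map H) t) = tclass s t.
Proof. rewrite <- (cT_id M _ t) at 2. apply tclass_map_eq. reflexivity. Qed.

Definition ext_map_rep {X Y : Type} (f : X -> Y) (r : Rep X) : ExtT Y :=
  tclass (enum_image f (projT1 r)) (cT_map M (image_map f (projT1 r)) (projT2 r)).

Lemma ext_map_rep_resp {X Y : Type} (f : X -> Y) r1 r2 :
  rep_equiv r1 r2 -> ext_map_rep f r1 = ext_map_rep f r2.
Proof.
  intros (s3 & H1 & H2 & E). unfold ext_map_rep.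
  transitivity (tclass (enum_image f s3)
    (cT_map M (image_map f s3) (cT_map M (incl_map H1) (projT2 r1)))).
  - rewrite cT_comp. apply tclass_map_eq. reflexivity.
  - rewrite E, cT_comp. apply tclass_map_eq. reflexivity.
Qed.

Definition ext_map {X Y : Type} (f : X -> Y) (q : ExtT X) : ExtT Y :=
  lift_class (ext_map_rep f) q.

Lemma ext_map_tclass {X Y : Type} (f : X -> Y) s t :
  ext_map f (tclass s t) = tclass (enum_image f s) (cT_map M (image_map f s) t).
Proof.
  unfold ext_map, tclass. rewrite lift_class_rep_class by apply ext_map_rep_resp.
  reflexivity.
Qed.

Lemma ext_map_tclass_comp {X Y : Type} (f : X -> Y) (Z : CSet) s (h0 : Z -> enum_set s) t
  s' (h : Z -> enum_set s') :
  (forall z, proj1_sig (h z) = f (proj1_sig (h0 z))) ->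
  ext_map f (tclass s (cT_map M h0 t)) = tclass s' (cT_map M h t).
Proof.
  intro H. rewrite ext_map_tclass, cT_comp. apply tclass_map_eq.
  intro z. simpl. symmetry; apply H.
Qed.

Lemma ext_map_id {X : Type} (q : ExtT X) : ext_map (fun a => a) q = q.
Proof.
  destruct (tclass_surj q) as (s & t & ->). rewrite <- (cT_id M _ t) at 1.
  rewrite (ext_map_tclass_comp _ _ s (fun a => a) t s (fun a => a)) by reflexivity.
  now rewrite cT_id.
Qed.

Lemma ext_map_comp {X Y Z : Type} (f : X -> Y) (g : Y -> Z) (q : ExtT X) :
  ext_map g (ext_map f q) = ext_map (fun a => g (f a)) q.
Proof.
  destruct (tclass_surj q) as (s & t & ->). rewrite ext_map_tclass.
  set (gf := fun p => image_map g _ (image_map f s p)).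
  rewrite (ext_map_tclass_comp g _ _ (image_map f s) t _ gf) by reflexivity.
  rewrite <- (cT_id M _ t) at 2.
  rewrite (ext_map_tclass_comp _ _ s (fun a => a) t _ gf) by reflexivity.
  reflexivity.
Qed.

Definition ext_eta {X : Type} (x : X) : ExtT X :=
  tclass (enum_single x) (c_eta M (enum_single_pt x)).

Lemma tclass_eta {X : Type} (s : nat -> option X) (u : enum_set s) :
  tclass s (c_eta M u) = ext_eta (proj1_sig u).
Proof.
  unfold ext_eta. set (pt := enum_single_pt (proj1_sig u)).
  transitivity (tclass s (cT_map M (fun _ : enum_set (enum_single (proj1_sig u)) => u)
    (c_eta M pt))).
  { rewrite <- c_eta_nat. reflexivity. }
  rewrite <- (cT_id M _ (c_eta M pt)) at 2.
  apply tclass_map_eq. intro z. symmetry. apply enum_single_val.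
Qed.

Lemma ext_eta_nat {X Y : Type} (f : X -> Y) (x : X) : ext_eta (f x) = ext_map f (ext_eta x).
Proof.
  unfold ext_eta at 2. rewrite ext_map_tclass, <- c_eta_nat. symmetry. apply tclass_eta.
Qed.

(** Countably many identifications are witnessed in one common subset, namely the
    union of the individual witnesses. *)
Lemma tclass_eq_family {Z : CSet} {X : Type} (V1 V2 : nat -> option X)
  (a1 : Z -> cT M (enum_set V1)) (a2 : Z -> cT M (enum_set V2)) :
  (forall z, tclass V1 (a1 z) = tclass V2 (a2 z)) ->
  exists U (i1 : enum_incl V1 U) (i2 : enum_incl V2 U),
    forall z, cT_map M (incl_map i1) (a1 z) = cT_map M (incl_map i2) (a2 z).
Proof.
  intro H. destruct (cs_cnt Z) as [f Hf].
  assert (Hn : forall n, exists w, forall z, f z = n ->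
     exists (j1 : enum_incl V1 w) (j2 : enum_incl V2 w),
       cT_map M (incl_map j1) (a1 z) = cT_map M (incl_map j2) (a2 z)).
  { intro n. destruct (classic (exists z, f z = n)) as [[z0 Hz0] | Hno].
    - destruct (rep_class_eq_equiv _ _ (H z0)) as (w & j1 & j2 & E).
      exists w. intros z Hz. assert (z = z0) by (apply Hf; congruence). subst z.
      exists j1, j2. exact E.
    - exists V1. intros z Hz. exfalso. apply Hno. eauto. }
  pose (w := fun n => proj1_sig (constructive_indefinite_description _ (Hn n))).
  assert (Hw : forall z, exists (j1 : enum_incl V1 (w (f z))) (j2 : enum_incl V2 (w (f z))),
     cT_map M (incl_map j1) (a1 z) = cT_map M (incl_map j2) (a2 z)).
  { intro z. unfold w.
    destruct (constructive_indefinite_description _ (Hn (f z))) as [w0 Hw0].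
    simpl. apply Hw0. reflexivity. }
  exists (enum_union (enum_union V1 V2) (enum_bigU w)),
    (enum_incl_trans _ _ _ (enum_union_l V1 V2) (enum_union_l _ _)),
    (enum_incl_trans _ _ _ (enum_union_r V1 V2) (enum_union_l _ _)).
  intro z. destruct (Hw z) as (j1 & j2 & E).
  pose (k := enum_incl_trans _ _ _ (enum_bigU_incl w (f z))
    (enum_union_r (enum_union V1 V2) (enum_bigU w))).
  transitivity (cT_map M (incl_map k) (cT_map M (incl_map j1) (a1 z))).
  - symmetry. apply cT_map_comp_val. reflexivity.
  - rewrite E. apply cT_map_comp_val. reflexivity.
Qed.

Definition flatten_enum {X : Type} (s : nat -> option (ExtT X)) : nat -> option X :=
  enum_bigU (fun n => match s n with
                      | Some q => projT1 (repr_of q)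
                      | None => fun _ => None end).

Lemma repr_of_incl_flatten {X : Type} (s : nat -> option (ExtT X)) (q : ExtT X) :
  in_enum s q -> enum_incl (projT1 (repr_of q)) (flatten_enum s).
Proof.
  intros [n Hn] x Hx. apply (enum_bigU_incl _ n). rewrite Hn. exact Hx.
Qed.

Definition flatten_repr {X : Type} (s : nat -> option (ExtT X)) (p : enum_set s)
  : cT M (enum_set (flatten_enum s)) :=
  cT_map M (incl_map (repr_of_incl_flatten s (proj1_sig p) (proj2_sig p)))
    (projT2 (repr_of (proj1_sig p))).

Lemma tclass_flatten_repr {X : Type} (s : nat -> option (ExtT X)) (p : enum_set s) :
  tclass (flatten_enum s) (flatten_repr s p) = proj1_sig p.
Proof.
  unfold flatten_repr. rewrite tclass_incl, <- rep_class_tclass. apply rep_class_repr_of.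
Qed.

Lemma flatten_exists {X : Type} (s : nat -> option (ExtT X)) :
  exists V (g : enum_set s -> cT M (enum_set V)), forall z, tclass V (g z) = proj1_sig z.
Proof. exists (flatten_enum s), (flatten_repr s). apply tclass_flatten_repr. Qed.

Definition ext_mu_rep {X : Type} (r : Rep (ExtT X)) : ExtT X :=
  tclass (flatten_enum (projT1 r)) (c_mu M (cT_map M (flatten_repr (projT1 r)) (projT2 r))).

Lemma tclass_mu_incl {X : Type} (V U : nat -> option X) (i : enum_incl V U)
  (x : cT M (cT M (enum_set V))) :
  tclass V (c_mu M x) = tclass U (c_mu M (cT_map M (cT_map M (incl_map i)) x)).
Proof. rewrite c_mu_nat. symmetry. apply tclass_incl. Qed.

Lemma ext_mu_rep_spec {X : Type} (Z : CSet) (s : nat -> option (ExtT X))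
  (h : Z -> enum_set s) t0 (V : nat -> option X) (g : Z -> cT M (enum_set V)) :
  (forall z, tclass V (g z) = proj1_sig (h z)) ->
  ext_mu_rep (existT _ s (cT_map M h t0)) = tclass V (c_mu M (cT_map M g t0)).
Proof.
  intro H. unfold ext_mu_rep; simpl. rewrite cT_comp.
  destruct (tclass_eq_family _ _ (fun z => flatten_repr s (h z)) g) as (U & i1 & i2 & E).
  { intro z. rewrite tclass_flatten_repr. symmetry. apply H. }
  rewrite (tclass_mu_incl _ _ i1), (tclass_mu_incl _ _ i2), !cT_comp.
  do 3 f_equal. extensionality z. apply E.
Qed.

Lemma ext_mu_rep_resp {X : Type} (r1 r2 : Rep (ExtT X)) :
  rep_equiv r1 r2 -> ext_mu_rep r1 = ext_mu_rep r2.
Proof.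
  intros (s3 & H1 & H2 & E). destruct r1 as [s1 t1], r2 as [s2 t2]. simpl in *.
  rewrite <- (cT_id M _ t1), <- (cT_id M _ t2).
  rewrite (ext_mu_rep_spec _ _ _ _ _ (fun p => flatten_repr s3 (incl_map H1 p)))
    by (intro z; rewrite tclass_flatten_repr; reflexivity).
  rewrite (ext_mu_rep_spec _ _ _ _ _ (fun p => flatten_repr s3 (incl_map H2 p)))
    by (intro z; rewrite tclass_flatten_repr; reflexivity).
  rewrite <- (cT_comp M _ _ _ (incl_map H1) (flatten_repr s3) t1),
    <- (cT_comp M _ _ _ (incl_map H2) (flatten_repr s3) t2), E.
  reflexivity.
Qed.

Definition ext_mu {X : Type} (q : ExtT (ExtT X)) : ExtT X := lift_class ext_mu_rep q.

Lemma ext_mu_tclass_comp {X : Type} (Z : CSet) (s : nat -> option (ExtT X))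
  (h : Z -> enum_set s) t0 (V : nat -> option X) (g : Z -> cT M (enum_set V)) :
  (forall z, tclass V (g z) = proj1_sig (h z)) ->
  ext_mu (tclass s (cT_map M h t0)) = tclass V (c_mu M (cT_map M g t0)).
Proof.
  intro H. unfold ext_mu, tclass. rewrite lift_class_rep_class by apply ext_mu_rep_resp.
  apply ext_mu_rep_spec, H.
Qed.

Lemma ext_mu_tclass {X : Type} (s : nat -> option (ExtT X)) t
  (V : nat -> option X) (g : enum_set s -> cT M (enum_set V)) :
  (forall z, tclass V (g z) = proj1_sig z) ->
  ext_mu (tclass s t) = tclass V (c_mu M (cT_map M g t)).
Proof. intro H. rewrite <- (cT_id M _ t) at 1. apply ext_mu_tclass_comp, H. Qed.

Lemma ext_mu_nat {X Y : Type} (f : X -> Y) (Q : ExtT (ExtT X)) :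
  ext_mu (ext_map (ext_map f) Q) = ext_map f (ext_mu Q).
Proof.
  destruct (tclass_surj Q) as (s & t & ->). destruct (flatten_exists s) as (V & g & Hg).
  rewrite (ext_mu_tclass s t V g Hg), !ext_map_tclass.
  rewrite (ext_mu_tclass_comp _ _ _ _ (enum_image f V)
    (fun z => cT_map M (image_map f V) (g z))).
  - rewrite <- c_mu_nat, <- cT_comp. reflexivity.
  - intro z. simpl. rewrite <- ext_map_tclass, Hg. reflexivity.
Qed.

Lemma ext_unit_l {X : Type} (q : ExtT X) : ext_mu (ext_eta q) = q.
Proof.
  destruct (tclass_surj q) as (s & t & ->). unfold ext_eta at 1.
  rewrite (ext_mu_tclass _ _ s (fun _ => t)).
  - rewrite <- c_eta_nat, c_unit_l. reflexivity.
  - intro z. rewrite enum_single_val. reflexivity.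
Qed.

Lemma ext_unit_r {X : Type} (q : ExtT X) : ext_mu (ext_map ext_eta q) = q.
Proof.
  destruct (tclass_surj q) as (s & t & ->). rewrite ext_map_tclass.
  rewrite (ext_mu_tclass_comp _ _ _ _ s (c_eta M)).
  - rewrite c_unit_r. reflexivity.
  - intro z. apply tclass_eta.
Qed.

Lemma ext_assoc {X : Type} (Q : ExtT (ExtT (ExtT X))) :
  ext_mu (ext_mu Q) = ext_mu (ext_map ext_mu Q).
Proof.
  destruct (tclass_surj Q) as (s & t & ->). destruct (flatten_exists s) as (V & g & Hg).
  destruct (flatten_exists V) as (V2 & g2 & Hg2).
  rewrite (ext_mu_tclass s t V g Hg), (ext_mu_tclass V _ V2 g2 Hg2), ext_map_tclass.
  rewrite (ext_mu_tclass_comp _ _ _ _ V2 (fun z => c_mu M (cT_map M g2 (g z)))).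
  - rewrite <- c_mu_nat, c_assoc, !cT_comp. reflexivity.
  - intro z. simpl. rewrite <- Hg. symmetry. apply ext_mu_tclass, Hg2.
Qed.

Definition ext_monad : Monad :=
  {| mT := ExtT; mT_map := @ext_map; mT_id := @ext_map_id; mT_comp := @ext_map_comp;
     m_eta := @ext_eta; m_mu := @ext_mu; m_eta_nat := @ext_eta_nat; m_mu_nat := @ext_mu_nat;
     m_unit_l := @ext_unit_l; m_unit_r := @ext_unit_r; m_assoc := @ext_assoc |}.

Definition cset_enum (X : CSet) : nat -> option X := enum_of_countable X (cs_cnt X).

Definition to_cset_enum (X : CSet) (x : X) : enum_set (cset_enum X) :=
  exist _ x (in_enum_of_countable X (cs_cnt X) x).

Definition ext_iso (X : CSet) (t : cT M X) : ExtT X :=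
  tclass (cset_enum X) (cT_map M (to_cset_enum X) t).

Definition ext_iso_inv_rep (X : CSet) (r : Rep X) : cT M X :=
  cT_map M (fun p : enum_set (projT1 r) => proj1_sig p) (projT2 r).

Lemma ext_iso_inv_rep_resp (X : CSet) r1 r2 :
  rep_equiv r1 r2 -> ext_iso_inv_rep X r1 = ext_iso_inv_rep X r2.
Proof.
  intros (s3 & H1 & H2 & E). unfold ext_iso_inv_rep.
  rewrite <- (cT_map_comp_ext (incl_map H1) (fun p : enum_set s3 => proj1_sig p))
    by reflexivity.
  rewrite E. apply cT_map_comp_ext. reflexivity.
Qed.

Definition ext_iso_inv (X : CSet) (q : ExtT X) : cT M X := lift_class (ext_iso_inv_rep X) q.

Lemma ext_iso_inv_tclass (X : CSet) s t :
  ext_iso_inv X (tclass s t) = cT_map M (fun p : enum_set s => proj1_sig p) t.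
Proof.
  unfold ext_iso_inv, tclass. rewrite lift_class_rep_class by apply ext_iso_inv_rep_resp.
  reflexivity.
Qed.

Lemma ext_iso_invK (X : CSet) t : ext_iso_inv X (ext_iso X t) = t.
Proof.
  unfold ext_iso. rewrite ext_iso_inv_tclass, (cT_map_comp_ext _ _ (fun a => a))
    by reflexivity.
  apply cT_id.
Qed.

Lemma ext_isoK (X : CSet) q : ext_iso X (ext_iso_inv X q) = q.
Proof.
  destruct (tclass_surj q) as (s & t & ->). rewrite ext_iso_inv_tclass. unfold ext_iso.
  rewrite cT_comp. transitivity (tclass s (cT_map M (fun p => p) t)).
  - apply tclass_map_eq. reflexivity.
  - now rewrite cT_id.
Qed.

Lemma ext_iso_nat (X Y : CSet) (f : X -> Y) t :
  ext_iso Y (cT_map M f t) = ext_map f (ext_iso X t).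
Proof.
  unfold ext_iso. symmetry.
  rewrite (ext_map_tclass_comp f _ _ _ t (cset_enum Y) (fun x => to_cset_enum Y (f x)))
    by reflexivity.
  rewrite cT_comp. reflexivity.
Qed.

Lemma ext_iso_eta (X : CSet) (x : X) : ext_iso X (c_eta M x) = ext_eta x.
Proof. unfold ext_iso. rewrite <- c_eta_nat. apply tclass_eta. Qed.

Lemma ext_iso_mu (X : CSet) t :
  ext_iso X (c_mu M t) = ext_mu (ext_map (ext_iso X) (ext_iso (cT M X) t)).
Proof.
  unfold ext_iso at 3. rewrite ext_map_tclass, cT_comp.
  rewrite (ext_mu_tclass_comp _ _ _ _ (cset_enum X) (fun z => cT_map M (to_cset_enum X) z))
    by reflexivity.
  unfold ext_iso. rewrite c_mu_nat. reflexivity.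
Qed.

Lemma extends_set_ext_monad : extends_set M ext_monad.
Proof.
  exists ext_iso. split; [| split; [| split]].
  - intro X. exists (ext_iso_inv X). split; [apply ext_iso_invK | apply ext_isoK].
  - apply ext_iso_nat.
  - apply ext_iso_eta.
  - apply ext_iso_mu.
Qed.

End Extension.

Section CoalgebraExtension.
Variables (M : cMonad) (B : Functor) (L : cLifting B M).

Lemma F_map_comp_ext {X Y Z : Type} (f : X -> Y) (g : Y -> Z) (h : X -> Z) x :
  (forall a, g (f a) = h a) -> F_map B g (F_map B f x) = F_map B h x.
Proof. intro H. rewrite F_comp. f_equal. extensionality a. apply H. Qed.

Lemma F_map_injective {A Y : Type} (f : A -> Y) (a0 : A) :
  injective f -> injective (F_map B f).
Proof.
  intros Hf b1 b2 E.
  pose (r := fun y => match excluded_middle_informative (exists a, f a = y) with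
                      | left e => proj1_sig (constructive_indefinite_description _ e)
                      | right _ => a0 end).
  assert (Hr : forall a, r (f a) = a).
  { intro a. unfold r. destruct (excluded_middle_informative _) as [e | ne].
    - destruct (constructive_indefinite_description _ e) as [a' Ha']. simpl. apply Hf, Ha'.
    - exfalso; eauto. }
  rewrite <- (F_id B A b1), <- (F_id B A b2).
  rewrite <- (F_map_comp_ext f r (fun a => a) b1 Hr),
    <- (F_map_comp_ext f r (fun a => a) b2 Hr), E.
  reflexivity.
Qed.

Definition enum_closed {X : Type} (c : X -> B X) (s : nat -> option X) : Prop :=
  forall p : enum_set s, exists b : B (enum_set s), F_map B (enum_val s) b = c (enum_val s p).

Definition sub_str {X : Type} (c : X -> B X) (s : nat -> option X) (Hc : enum_closed c s)
  (p : enum_set s) : B (enum_set s) :=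
  proj1_sig (constructive_indefinite_description _ (Hc p)).

Lemma sub_str_spec {X : Type} (c : X -> B X) s Hc p :
  F_map B (enum_val s) (sub_str c s Hc p) = c (enum_val s p).
Proof. unfold sub_str. destruct (constructive_indefinite_description _ _). auto. Qed.

Definition sub_coalg {X : Type} (c : X -> B X) (s : nat -> option X) (Hc : enum_closed c s)
  : CCoalg B := {| cc_car := enum_set s; cc_str := sub_str c s Hc |}.

Lemma sub_str_hom {X Y : Type} (c : X -> B X) (d : Y -> B Y) (h : X -> Y) (Hh : is_hom c d h)
  s Hc s' Hc' (hs : enum_set s -> enum_set s') :
  (forall p, enum_val s' (hs p) = h (enum_val s p)) ->
  is_hom (sub_str c s Hc) (sub_str d s' Hc') hs.
Proof.
  intros E p. apply (F_map_injective (enum_val s') (hs p) (enum_val_injective s')).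
  rewrite (F_map_comp_ext hs (enum_val s') (fun a => h (enum_val s a))) by apply E.
  rewrite sub_str_spec, <- (F_map_comp_ext (enum_val s) h) by reflexivity.
  rewrite sub_str_spec, E. apply Hh.
Qed.

Lemma enum_closed_image {X Y : Type} (c : X -> B X) (d : Y -> B Y) (h : X -> Y) s :
  is_hom c d h -> enum_closed c s -> enum_closed d (enum_image h s).
Proof.
  intros Hh Hc p'. pose proof (proj2_sig p') as [n Hn]. unfold enum_image in Hn.
  destruct (s n) as [x|] eqn:Esn; simpl in Hn; [| discriminate]. injection Hn as Hy.
  destruct (Hc (exist _ x (ex_intro _ n Esn))) as [b Hb].
  exists (F_map B (image_map h s) b). unfold enum_val in *; simpl in *.
  transitivity (d (h x)); [| f_equal; exact Hy].
  rewrite <- Hh, <- Hb, !F_comp. reflexivity.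
Qed.

Section Closure.
Hypothesis HB : countably_accessible B.

Lemma support_exists {X : Type} (c : X -> B X) (x : X) :
  exists s, exists b : B (enum_set s), F_map B (enum_val s) b = c x.
Proof.
  destruct (HB X (c x)) as (Y & i & HY & _ & y & Hy).
  exists (enum_image i (enum_of_countable Y HY)).
  exists (F_map B (fun y => image_map i _ (exist _ y (in_enum_of_countable Y HY y))) y).
  rewrite F_comp. exact Hy.
Qed.

Definition support {X : Type} (c : X -> B X) (x : X) : nat -> option X :=
  proj1_sig (constructive_indefinite_description _ (support_exists c x)).

Lemma support_spec {X : Type} (c : X -> B X) (x : X) :
  exists b : B (enum_set (support c x)), F_map B (enum_val _) b = c x.
Proof. unfold support. destruct (constructive_indefinite_description _ _). auto. Qed.

Definition closure_step {X : Type} (c : X -> B X) (s : nat -> option X) : nat -> option X :=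
  enum_union s (enum_bigU (fun n => match s n with
                                    | Some x => support c x
                                    | None => fun _ => None end)).

(** Iterating [closure_step] countably often adds the supports of the structures of all
    elements reached so far, giving the countable subcoalgebra generated by [s]. *)
Lemma enum_closure {X : Type} (c : X -> B X) (s : nat -> option X) :
  exists s', enum_incl s s' /\ enum_closed c s'.
Proof.
  set (chain := fun k => Nat.iter k (closure_step c) s).
  exists (enum_bigU chain). split; [apply (enum_bigU_incl chain 0) |].
  intros [x Hx]. unfold enum_val; simpl.
  destruct (in_enum_bigU _ _ Hx) as [k [n Hn]].
  assert (Hs : enum_incl (support c x) (enum_bigU chain)).
  { intros y Hy. apply (enum_bigU_incl chain (S k)). simpl. apply enum_union_r.
    apply (enum_bigU_incl _ n). rewrite Hn. exact Hy. }
  destruct (support_spec c x) as [b Hb].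
  exists (F_map B (incl_map Hs) b). rewrite <- Hb. apply F_map_comp_ext. reflexivity.
Qed.

Definition ext_str_at {X : Type} (c : X -> B X) s (Hc : enum_closed c s)
  (t : cT M (enum_set s)) : B (ExtT M X) :=
  F_map B (tclass M s) (lstr L (sub_coalg c s Hc) t).

Lemma ext_str_at_incl {X : Type} (c : X -> B X) s Hc s' Hc' (H : enum_incl s s') t :
  ext_str_at c s Hc t = ext_str_at c s' Hc' (cT_map M (incl_map H) t).
Proof.
  unfold ext_str_at.
  assert (Hh : is_hom (sub_str c s Hc) (sub_str c s' Hc') (incl_map H)).
  { apply (sub_str_hom c c (fun a => a)); [intro x; apply F_id | reflexivity]. }
  pose proof (lmap_hom B M L (sub_coalg c s Hc) (sub_coalg c s' Hc') (incl_map H) Hh t) as E.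
  transitivity (F_map B (tclass M s')
    (F_map B (cT_map M (incl_map H)) (lstr L (sub_coalg c s Hc) t))).
  - symmetry. apply F_map_comp_ext. intro a. apply tclass_incl.
  - exact (f_equal _ E).
Qed.

Lemma ext_str_at_eq {X : Type} (c : X -> B X) s1 Hc1 t1 s2 Hc2 t2 :
  tclass M s1 t1 = tclass M s2 t2 -> ext_str_at c s1 Hc1 t1 = ext_str_at c s2 Hc2 t2.
Proof.
  intro E. destruct (rep_class_eq_equiv M _ _ E) as (s3 & H1 & H2 & E3). simpl in *.
  destruct (enum_closure c s3) as (s4 & H34 & Hc4).
  rewrite (ext_str_at_incl c s1 Hc1 s4 Hc4 (enum_incl_trans _ _ _ H1 H34)),
    (ext_str_at_incl c s2 Hc2 s4 Hc4 (enum_incl_trans _ _ _ H2 H34)).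
  f_equal.
  rewrite <- (cT_map_comp_val M _ (incl_map H1) (incl_map H34)) by reflexivity.
  rewrite E3. apply cT_map_comp_val. reflexivity.
Qed.

Definition ext_str {X : Type} (c : X -> B X) (q : ExtT M X) : B (ExtT M X) :=
  let r := repr_of M q in
  let e := constructive_indefinite_description _ (enum_closure c (projT1 r)) in
  ext_str_at c (proj1_sig e) (proj2 (proj2_sig e))
    (cT_map M (incl_map (proj1 (proj2_sig e))) (projT2 r)).

Lemma ext_str_tclass {X : Type} (c : X -> B X) s Hc t :
  ext_str c (tclass M s t) = ext_str_at c s Hc t.
Proof.
  unfold ext_str. destruct (constructive_indefinite_description _ _) as [s' [Hi Hc']]. simpl.
  apply ext_str_at_eq. rewrite tclass_incl, <- rep_class_tclass. apply rep_class_repr_of.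
Qed.

Lemma tclass_closed_surj {X : Type} (c : X -> B X) (q : ExtT M X) :
  exists s (Hc : enum_closed c s) t, q = tclass M s t.
Proof.
  destruct (tclass_surj M q) as (s & t & ->). destruct (enum_closure c s) as (s' & Hi & Hc).
  exists s', Hc, (cT_map M (incl_map Hi) t). symmetry. apply tclass_incl.
Qed.

Lemma incl_map_retraction {X : Type} (V U : nat -> option X) (H : enum_incl V U) :
  inhabited (enum_set V) \/ ~ inhabited X ->
  exists r : enum_set U -> enum_set V, forall p, r (incl_map H p) = p.
Proof.
  intros [[p0] | nX].
  - exists (fun w => match excluded_middle_informative (in_enum V (proj1_sig w)) with
                     | left Hw => exist _ (proj1_sig w) Hw | right _ => p0 end).
    intro p. destruct (excluded_middle_informative _) as [Hw | n].
    + apply sig_val_inj. reflexivity.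
    + exfalso. apply n, (proj2_sig p).
  - exists (fun w => False_rect _ (nX (inhabits (proj1_sig w)))).
    intro p. exfalso. apply nX. exact (inhabits (proj1_sig p)).
Qed.

Lemma tclass_injective {X : Type} (V : nat -> option X) :
  inhabited (enum_set V) \/ ~ inhabited X -> injective (tclass M V).
Proof.
  intros Hinh u1 u2 E. destruct (rep_class_eq_equiv M _ _ E) as (s3 & H1 & H2 & E3).
  simpl in *.
  assert (incl_map H2 = incl_map H1) as Eh
    by (extensionality p; apply sig_val_inj; reflexivity).
  rewrite Eh in E3. destruct (incl_map_retraction V s3 H1 Hinh) as [r Hr].
  rewrite <- (cT_id M _ u1), <- (cT_id M _ u2),
    <- (cT_map_comp_ext M (incl_map H1) r (fun a => a) u1 Hr),
    <- (cT_map_comp_ext M (incl_map H1) r (fun a => a) u2 Hr), E3.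
  reflexivity.
Qed.

Lemma enum_closure_inhabited {X : Type} (c : X -> B X) (s : nat -> option X) :
  exists s', enum_incl s s' /\ enum_closed c s' /\
    (inhabited (enum_set s') \/ ~ inhabited X).
Proof.
  destruct (classic (inhabited X)) as [[x0] | nX].
  - destruct (enum_closure c (enum_union s (enum_single x0))) as (s' & Hi & Hc).
    exists s'. split; [exact (enum_incl_trans _ _ _ (enum_union_l _ _) Hi) |].
    split; [exact Hc |]. left. constructor.
    exact (exist _ x0 (Hi x0 (enum_union_r s (enum_single x0) x0 (ex_intro _ 0 eq_refl)))).
  - destruct (enum_closure c s) as (s' & Hi & Hc). exists s'. auto.
Qed.

Lemma ext_map_hom {X Y : Type} (c : X -> B X) (d : Y -> B Y) (h : X -> Y) :
  is_hom c d h -> is_hom (ext_str c) (ext_str d) (ext_map M h).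
Proof.
  intros Hh q. destruct (tclass_closed_surj c q) as (s & Hc & t & ->).
  pose proof (enum_closed_image c d h s Hh Hc) as Hc'.
  rewrite ext_map_tclass, (ext_str_tclass d _ Hc'), (ext_str_tclass c _ Hc).
  unfold ext_str_at.
  assert (Hhs : is_hom (sub_str c s Hc) (sub_str d _ Hc') (image_map h s))
    by (apply (sub_str_hom c d h Hh); reflexivity).
  pose proof (lmap_hom B M L (sub_coalg c s Hc) (sub_coalg d _ Hc') _ Hhs t) as E.
  transitivity (F_map B (tclass M (enum_image h s))
    (F_map B (cT_map M (image_map h s)) (lstr L (sub_coalg c s Hc) t))).
  - rewrite !F_comp. f_equal. extensionality a. apply ext_map_tclass.
  - exact (f_equal _ E).
Qed.

Lemma ext_eta_hom {X : Type} (c : X -> B X) : is_hom c (ext_str c) (ext_eta M).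
Proof.
  intro x. destruct (enum_closure c (enum_single x)) as (s & Hi & Hc).
  pose (u := incl_map Hi (enum_single_pt x)).
  replace (ext_eta M x) with (tclass M s (c_eta M u)) by apply tclass_eta.
  rewrite (ext_str_tclass c s Hc). unfold ext_str_at.
  pose proof (leta_hom B M L (sub_coalg c s Hc) u) as E.
  transitivity (F_map B (tclass M s) (F_map B (@c_eta M (enum_set s)) (sub_str c s Hc u)));
    [| exact (f_equal _ E)].
  transitivity (F_map B (ext_eta M) (F_map B (enum_val s) (sub_str c s Hc u)));
    [rewrite sub_str_spec; reflexivity |].
  rewrite !F_comp. f_equal. extensionality v. symmetry. apply tclass_eta.
Qed.

(** Multiplication is a homomorphism because, after choosing representatives over one
    closed subset [V], it is computed by [c_mu] on a subcoalgebra, where the lifting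
    makes it one. *)
Lemma ext_mu_hom {X : Type} (c : X -> B X) : is_hom (ext_str (ext_str c)) (ext_str c) (ext_mu M).
Proof.
  intro Q. destruct (tclass_closed_surj (ext_str c) Q) as (s & Hs & t & ->).
  destruct (flatten_exists M s) as (V0 & g0 & Hg0).
  destruct (enum_closure_inhabited c V0) as (V & Hi & Hc & Hinh).
  pose (g := fun z => cT_map M (incl_map Hi) (g0 z)).
  assert (Hg : forall z, tclass M V (g z) = proj1_sig z)
    by (intro z; unfold g; rewrite tclass_incl; apply Hg0).
  assert (Hhom : is_hom (sub_str (ext_str c) s Hs) (lstr L (sub_coalg c V Hc)) g).
  { intro p. apply (F_map_injective (tclass M V) (g p) (tclass_injective V Hinh)).
    rewrite (F_map_comp_ext g (tclass M V) (enum_val s)) by apply Hg.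
    rewrite sub_str_spec. unfold enum_val at 1. rewrite <- Hg, (ext_str_tclass c V Hc).
    reflexivity. }
  rewrite (ext_mu_tclass M s t V g Hg), (ext_str_tclass (ext_str c) s Hs t),
    (ext_str_tclass c V Hc). unfold ext_str_at.
  pose proof (lmu_hom B M L (sub_coalg c V Hc) (cT_map M g t)) as E1.
  pose proof (lmap_hom B M L (sub_coalg (ext_str c) s Hs) (Tbarc L (sub_coalg c V Hc))
    g Hhom t) as E2.
  transitivity (F_map B (tclass M V) (F_map B (c_mu M)
     (F_map B (cT_map M g) (lstr L (sub_coalg (ext_str c) s Hs) t)))).
  { rewrite !F_comp. f_equal. extensionality a. apply ext_mu_tclass, Hg. }
  transitivity (F_map B (tclass M V) (F_map B (c_mu M)
     (lstr L (Tbarc L (sub_coalg c V Hc)) (cT_map M g t)))).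
  - f_equal. f_equal. exact E2.
  - f_equal. exact E1.
Qed.

Definition ext_coalg (C : Coalg B) : Coalg B :=
  {| car := ExtT M (car C); str := ext_str (str C) |}.

Definition ext_coalg_map (C D : Coalg B) (h : CHom C D) : CHom (ext_coalg C) (ext_coalg D) :=
  Build_CHom B (ext_coalg C) (ext_coalg D) (ext_map M (hfun h))
    (ext_map_hom (str C) (str D) (hfun h) (hhom h)).

Definition ext_coalg_eta (C : Coalg B) : CHom C (ext_coalg C) :=
  Build_CHom B C (ext_coalg C) (ext_eta M) (ext_eta_hom (str C)).

Definition ext_coalg_mu (C : Coalg B) : CHom (ext_coalg (ext_coalg C)) (ext_coalg C) :=
  Build_CHom B (ext_coalg (ext_coalg C)) (ext_coalg C) (ext_mu M) (ext_mu_hom (str C)).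

Definition ext_coalg_monad : CoalgMonad B :=
  {| bT := ext_coalg; bT_map := ext_coalg_map;
     bT_id := fun C t => ext_map_id M t;
     bT_comp := fun C D E f g t => ext_map_comp M (hfun f) (hfun g) t;
     b_eta := ext_coalg_eta; b_mu := ext_coalg_mu;
     b_eta_nat := fun C D f x => ext_eta_nat M (hfun f) x;
     b_mu_nat := fun C D f t => ext_mu_nat M (hfun f) t;
     b_unit_l := fun C t => ext_unit_l M t;
     b_unit_r := fun C t => ext_unit_r M t;
     b_assoc := fun C t => ext_assoc M t |}.

Lemma cset_enum_closed (C : CCoalg B) : enum_closed (cc_str C) (cset_enum (cc_car C)).
Proof.
  intro p. exists (F_map B (to_cset_enum (cc_car C)) (cc_str C (enum_val _ p))).
  rewrite F_comp. apply F_id.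
Qed.

Lemma ext_iso_hom (C : CCoalg B) :
  is_hom (lstr L C) (ext_str (cc_str C)) (ext_iso M (cc_car C)).
Proof.
  intro t. pose proof (cset_enum_closed C) as Hc. unfold ext_iso.
  rewrite (ext_str_tclass _ _ Hc). unfold ext_str_at.
  assert (Hto : is_hom (cc_str C) (sub_str (cc_str C) _ Hc) (to_cset_enum (cc_car C))).
  { intro x. apply (F_map_injective (enum_val _) (to_cset_enum _ x) (enum_val_injective _)).
    rewrite sub_str_spec, F_comp. apply F_id. }
  pose proof (lmap_hom B M L C (sub_coalg _ _ Hc) _ Hto t) as E.
  rewrite <- F_comp. exact (f_equal _ E).
Qed.

Lemma ext_iso_inv_hom (C : CCoalg B) :
  is_hom (ext_str (cc_str C)) (lstr L C) (ext_iso_inv M (cc_car C)).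
Proof.
  intro q. rewrite <- (ext_isoK M _ q) at 1. rewrite <- ext_iso_hom.
  rewrite (F_map_comp_ext _ _ (fun a => a)) by apply ext_iso_invK. apply F_id.
Qed.

Lemma extends_coalg_ext : extends_coalg L ext_coalg_monad.
Proof.
  exists (fun C => Build_CHom B (Ibar (Tbarc L C)) (ext_coalg (Ibar C))
    (ext_iso M (cc_car C)) (ext_iso_hom C)).
  split; [| split; [| split]].
  - intro C. exists (Build_CHom B (ext_coalg (Ibar C)) (Ibar (Tbarc L C))
      (ext_iso_inv M (cc_car C)) (ext_iso_inv_hom C)).
    split; intros; [apply ext_iso_invK | apply ext_isoK].
  - intros C D h t. apply ext_iso_nat.
  - intros C x. apply ext_iso_eta.
  - intros C t. apply ext_iso_mu.
Qed.

Lemma lifts_upto_iso_ext : lifts_upto_iso (ext_monad M) ext_coalg_monad.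
Proof.
  exists (fun C (t : car (bT ext_coalg_monad C)) => (t : ext_monad M (car C))).
  split; [| split; [| split]].
  - intro C. exists (fun t => t). split; reflexivity.
  - reflexivity.
  - reflexivity.
  - intros C t. simpl. rewrite ext_map_id. reflexivity.
Qed.

End Closure.
End CoalgebraExtension.

Theorem mainTheorem13 (B : Functor) (HB : countably_accessible B)
  (M : cMonad) (L : cLifting B M) :
  exists (N : Monad) (P : CoalgMonad B),
    extends_set M N /\ extends_coalg L P /\ lifts_upto_iso N P.
Proof.
  exists (ext_monad M), (ext_coalg_monad M B L HB).
  split; [apply extends_set_ext_monad |].
  split; [apply extends_coalg_ext | apply lifts_upto_iso_ext].
Qed.
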